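(* Fix a state $s$, a utility $u:\mathcal S\times\Omega\times\mathcal A\to[0,1]$, a function $Q:\mathcal S\times\Omega\times\mathcal A\to[0,H]$ and priors $\mu_1,\mu_2\in\Delta(\Omega)$, and let $\mathcal B_{1,2}=\mathbb B(\mu_1,\|\mu_1-\mu_2\|_1)$. Then $$\max_{\pi_1\in\mathrm{Pers}(\mu_1,u)}\langle Q,\mu_1\otimes\pi_1\rangle(s)-\max_{\pi_2\in\mathrm{Pers}(\mu_2,u)}\langle Q,\mu_2\otimes\pi_2\rangle(s)\le\mathrm{Gap}(s,\mu_1,\mathcal B_{1,2};Q)+\frac H2\|\mu_1-\mu_2\|_1.$$
   Context: $\mathcal A$ is a finite action set, $\mathcal S$ a state space and $\Omega$ an outcome space; $\Delta(\Omega)$ is the set of probability distributions on $\Omega$ (with densities/mass functions $\mu(\omega)$), and $\|\mu-\mu'\|_1=\int_\Omega|\mu(\omega)-\mu'(\omega)|\,\mathrm d\omega$. A signaling scheme $\pi$ assigns to each $(s,\omega)$ a distribution $\pi(\cdot\mid s,\omega)\in\Delta(\mathcal A)$. For a prior $\mu$ and utility $u$, $\mathrm{Pers}(\mu,u)$ is the set of $\pi$ with $\int_\Omega\mu(\omega)\pi(a\mid s,\omega)[u(s,\omega,a)-u(s,\omega,a')]\,\mathrm d\omega\ge0$ for all $a,a'\in\mathcal A$ and states $s$; for a set $\mathcal B\subseteq\Delta(\Omega)$, $\mathrm{Pers}(\mathcal B,u)=\bigcap_{\mu'\in\mathcal B}\mathrm{Pers}(\mu',u)$. $\langle Q,\mu\otimes\pi\rangle(s)=\mathbb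 E_{\omega\sim\mu,\,a\sim\pi(\cdot\mid s,\omega)}[Q(s,\omega,a)]$. The robustness gap is $\mathrm{Gap}(s,\mu,\mathcal B;Q)=\max_{\pi\in\mathrm{Pers}(\mu,u)}\langle Q,\mu\otimes\pi\rangle(s)-\max_{\pi\in\mathrm{Pers}(\mathcal B,u)}\langle Q,\mu\otimes\pi\rangle(s)$. $\mathbb B(\mu,\epsilon)=\{\mu'\in\Delta(\Omega):\|\mu-\mu'\|_1\le\epsilon\}$. *)

From HB Require Import structures.
From mathcomp Require Import all_boot all_order all_algebra.
From mathcomp Require Import all_classical all_reals all_analysis.
Set Implicit Arguments. Unset Strict Implicit. Unset Printing Implicit Defensive.
Import Order.TTheory GRing.Theory Num.Theory.
Local Open Scope classical_set_scope.
Local Open Scope ring_scope.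

Section Persuasion.
Context {R : realType} {d : measure_display} {Omega : measurableType d}
  (lam : {measure set Omega -> \bar R}) {S : Type} {A : finType}.

Definition is_prior (mu : Omega -> R) : Prop :=
  [/\ measurable_fun setT mu, (forall w, 0 <= mu w)
    & (\int[lam]_w (mu w)%:E = 1)%E].

Definition L1dist (mu mu' : Omega -> R) : \bar R :=
  (\int[lam]_w (`|mu w - mu' w|)%:E)%E.

Definition L1ball (mu : Omega -> R) (eps : \bar R) : set (Omega -> R) :=
  [set mu' | is_prior mu' /\ (L1dist mu mu' <= eps)%E].

Definition is_scheme (pi : S -> Omega -> A -> R) : Prop :=
  forall s, [/\ (forall a, measurable_fun setT (fun w => pi s w a)),
    (forall w a, 0 <= pi s w a) & (forall w, \sum_(a : A) pi s w a = 1)].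

Definition Pers (mu : Omega -> R) (u : S -> Omega -> A -> R)
  (pi : S -> Omega -> A -> R) : Prop :=
  is_scheme pi /\ forall s (a a' : A),
    (0 <= \int[lam]_w (mu w * pi s w a * (u s w a - u s w a'))%:E)%E.

Definition PersSet (B : set (Omega -> R)) (u : S -> Omega -> A -> R)
  (pi : S -> Omega -> A -> R) : Prop :=
  is_scheme pi /\ forall mu', B mu' -> Pers mu' u pi.

Definition value (Q : S -> Omega -> A -> R) (mu : Omega -> R)
  (pi : S -> Omega -> A -> R) (s : S) : \bar R :=
  (\int[lam]_w (mu w * \sum_(a : A) pi s w a * Q s w a)%:E)%E.

Definition optPers (Q u : S -> Omega -> A -> R) (mu : Omega -> R) (s : S) : \bar R :=
  ereal_sup [set value Q mu pi s | pi in Pers mu u].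

Definition optPersSet (Q u : S -> Omega -> A -> R) (mu : Omega -> R)
  (B : set (Omega -> R)) (s : S) : \bar R :=
  ereal_sup [set value Q mu pi s | pi in PersSet B u].

Definition Gap (u : S -> Omega -> A -> R) (s : S) (mu : Omega -> R)
  (B : set (Omega -> R)) (Q : S -> Omega -> A -> R) : \bar R :=
  (optPers Q u mu s - optPersSet Q u mu B s)%E.

End Persuasion.

(** For a fixed signaling scheme, moving the prior from [mu1] to [mu2] changes
    the value [<Q, mu (x) pi>(s)] by at most [H/2 * ||mu1 - mu2||_1]: both priors
    have mass 1, so [Q] may be centred at [H/2] before integrating, and the
    centred expected payoff has absolute value at most [H/2].  Every scheme that
    is persuasive for the whole ball [B(mu1, ||mu1 - mu2||_1)] is persuasive for
    [mu2] in particular, hence the robust optimum at [mu1] is at most the optimum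
    at [mu2] plus [H/2 * ||mu1 - mu2||_1]; subtracting this from the optimum at
    [mu1] yields the bound. *)

From HB Require Import structures.
From mathcomp Require Import all_boot all_order all_algebra.
From mathcomp Require Import all_classical all_reals all_analysis.
From mathcomp Require Import measurable_realfun lra.
Set Implicit Arguments. Unset Strict Implicit. Unset Printing Implicit Defensive.
Import Order.TTheory GRing.Theory Num.Theory.
Local Open Scope classical_set_scope.
Local Open Scope ring_scope.

Lemma ler_centered_mul {R : realFieldType} {H y : R} (x : R) :
  0 <= y <= H -> x * (y - H / 2) <= H / 2 * `|x|.
Proof.
move=> /andP[y0 yH]; have [x0|x0] := lerP 0 x.
- by rewrite ger0_norm //; nra.
- by rewrite ltr0_norm //; nra.
Qed.

Lemma lee_subeD {R : realDomainType} (x1 x2 y c : \bar R) :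
  (x1 < +oo)%E -> (x2 < +oo)%E -> (y < +oo)%E -> (0 <= c)%E ->
  (y <= x2 + c)%E -> (x1 - x2 <= (x1 - y) + c)%E.
Proof.
case: x1 => [r1||] //; case: x2 => [r2||] //; case: y => [r3||] //;
  case: c => [r4||] //= _ _ _; rewrite ?lee_fin.
- by lra.
all: by move=> *; rewrite ?addey ?addye ?leey.
Qed.

Section PriorSensitivity.
Context {R : realType} {d : measure_display} {Omega : measurableType d}
  (lam : {measure set Omega -> \bar R}) {S : Type} {A : finType}.

Lemma prior_support_neq0 (mu : Omega -> R) : is_prior lam mu -> [set: Omega] !=set0.
Proof.
case=> _ _ mu1; apply/set0P/eqP => setT0.
by move: mu1; rewrite setT0 integral_set0 => /eqP; rewrite eqe eq_sym oner_eq0.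
Qed.

Lemma ge0_integral_EFinD (g h : Omega -> R) :
  measurable_fun setT g -> measurable_fun setT h ->
  (forall w, 0 <= g w) -> (forall w, 0 <= h w) ->
  (\int[lam]_w (g w + h w)%:E = \int[lam]_w (g w)%:E + \int[lam]_w (h w)%:E)%E.
Proof.
move=> mg mh g0 h0; under eq_integral do rewrite EFinD.
by apply: ge0_integralD => // [w _||w _|]; rewrite ?lee_fin //; exact/measurable_EFinP.
Qed.

Lemma ge0_integral_EFinZl (c : R) (g : Omega -> R) :
  0 <= c -> measurable_fun setT g -> (forall w, 0 <= g w) ->
  (\int[lam]_w (c * g w)%:E = c%:E * \int[lam]_w (g w)%:E)%E.
Proof.
move=> c0 mg g0; under eq_integral do rewrite EFinM.
by apply: ge0_integralZl_EFin => // [w _|]; rewrite ?lee_fin //; exact/measurable_EFinP.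
Qed.

Variables (Q : S -> Omega -> A -> R) (H : R).
Hypothesis H_ge0 : 0 <= H.
Hypothesis Q_bounded : forall s w a, 0 <= Q s w a <= H.
Hypothesis Q_measurable : forall s a, measurable_fun setT (fun w => Q s w a).

Definition scheme_mean (pi : S -> Omega -> A -> R) (s : S) (w : Omega) : R :=
  \sum_(a : A) pi s w a * Q s w a.

Section FixedScheme.
Variables (pi : S -> Omega -> A -> R) (s : S).
Hypothesis pi_scheme : is_scheme pi.

Lemma measurable_scheme_mean : measurable_fun setT (scheme_mean pi s).
Proof.
have [mpi _ _] := pi_scheme s.
by apply: measurable_sum => a; exact: measurable_funM.
Qed.

Lemma scheme_mean_bounded w : 0 <= scheme_mean pi s w <= H.
Proof.
have [_ pi0 pi1] := pi_scheme s.
apply/andP; split.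
  by apply: sumr_ge0 => a _; rewrite mulr_ge0 //; case/andP: (Q_bounded s w a).
rewrite /scheme_mean -[H]mul1r -(pi1 w) mulr_suml; apply: ler_sum => a _.
by rewrite ler_wpM2l //; case/andP: (Q_bounded s w a).
Qed.

Let mean_ge0 w : 0 <= scheme_mean pi s w.
Proof. by case/andP: (scheme_mean_bounded w). Qed.

Lemma value_le_bound (mu : Omega -> R) : is_prior lam mu ->
  (value lam Q mu pi s <= H%:E)%E.
Proof.
case=> mmu mu0 mu1.
apply: (@le_trans _ _ (\int[lam]_w (H * mu w)%:E)%E).
  apply: ge0_le_integral => // [w _|||w _].
  - by rewrite lee_fin; exact: mulr_ge0 (mu0 w) (mean_ge0 w).
  - by apply/measurable_EFinP; apply: measurable_funM => //; exact: measurable_scheme_mean.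
  - by apply/measurable_EFinP; exact: measurable_funM.
  - by rewrite lee_fin mulrC ler_wpM2r //; case/andP: (scheme_mean_bounded w).
by rewrite ge0_integral_EFinZl // mu1 mule1.
Qed.

Lemma value_le_L1dist (mu1 mu2 : Omega -> R) :
  is_prior lam mu1 -> is_prior lam mu2 ->
  (value lam Q mu1 pi s <= value lam Q mu2 pi s + (H / 2)%:E * L1dist lam mu1 mu2)%E.
Proof.
move=> [m1 p1 i1] [m2 p2 i2].
pose f := scheme_mean pi s; pose dist w := `|mu1 w - mu2 w|.
have h0 : 0 <= H / 2 by rewrite divr_ge0.
have mf : measurable_fun setT f := measurable_scheme_mean.
have pdist w : 0 <= dist w := normr_ge0 _.
have mdist : measurable_fun setT dist.
  by apply: measurableT_comp => //; exact: measurable_funB.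
have m1f : measurable_fun setT (fun w => mu1 w * f w) by exact: measurable_funM.
have m2f : measurable_fun setT (fun w => mu2 w * f w) by exact: measurable_funM.
have integrated : (\int[lam]_w (mu1 w * f w + H / 2 * mu2 w)%:E
    <= \int[lam]_w (mu2 w * f w + (H / 2 * mu1 w + H / 2 * dist w))%:E)%E.
  apply: ge0_le_integral => // [w _|||w _].
  - by rewrite lee_fin addr_ge0 ?mulr_ge0.
  - by apply/measurable_EFinP; apply: measurable_funD => //; exact: measurable_funM.
  - by apply/measurable_EFinP; do 2 apply: measurable_funD => //; exact: measurable_funM.
  - rewrite lee_fin; have := ler_centered_mul (mu1 w - mu2 w) (scheme_mean_bounded w).
    by rewrite /dist /f; lra.
move: integrated; rewrite !ge0_integral_EFinD ?ge0_integral_EFinZl //.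
  by rewrite i1 i2 mule1 addeCA [X in (_ <= X)%E]addeC leeD2rE.
all: by [ move=> w; rewrite ?addr_ge0 ?mulr_ge0 ?pdist
        | apply: measurable_funD; exact: measurable_funM | exact: measurable_funM ].
Qed.

End FixedScheme.

Variables (u : S -> Omega -> A -> R) (s : S).

Lemma optPers_le_bound (mu : Omega -> R) : is_prior lam mu ->
  (optPers lam Q u mu s <= H%:E)%E.
Proof. by move=> prior; apply: ge_ereal_sup => _ [pi [scheme _] <-]; exact: value_le_bound. Qed.

Lemma optPersSet_le_bound (mu : Omega -> R) (B : set (Omega -> R)) :
  is_prior lam mu -> (optPersSet lam Q u mu B s <= H%:E)%E.
Proof. by move=> prior; apply: ge_ereal_sup => _ [pi [scheme _] <-]; exact: value_le_bound. Qed.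

Lemma optPersSet_le_optPers_L1dist (mu1 mu2 : Omega -> R) (B : set (Omega -> R)) :
  is_prior lam mu1 -> is_prior lam mu2 -> B mu2 ->
  (optPersSet lam Q u mu1 B s <= optPers lam Q u mu2 s + (H / 2)%:E * L1dist lam mu1 mu2)%E.
Proof.
move=> prior1 prior2 B_mu2; apply: ge_ereal_sup => _ [pi [scheme persB] <-].
apply: le_trans (value_le_L1dist s scheme prior1 prior2) _.
by rewrite leeD2r //; apply: ereal_sup_ubound; exists pi => //; exact: persB.
Qed.

End PriorSensitivity.

Theorem mainTheorem9 (R : realType) (d : measure_display) (Omega : measurableType d)
  (lam : {measure set Omega -> \bar R}) (S : Type) (A : finType) (a0 : A)
  (s : S) (u Q : S -> Omega -> A -> R) (H : R) (mu1 mu2 : Omega -> R) :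
  (forall s' w a, 0 <= u s' w a <= 1) ->
  (forall s' a, measurable_fun setT (fun w => u s' w a)) ->
  (forall s' w a, 0 <= Q s' w a <= H) ->
  (forall s' a, measurable_fun setT (fun w => Q s' w a)) ->
  is_prior lam mu1 -> is_prior lam mu2 ->
  (optPers lam Q u mu1 s - optPers lam Q u mu2 s <=
   Gap lam u s mu1 (L1ball lam mu1 (L1dist lam mu1 mu2)) Q
   + (H / 2)%:E * L1dist lam mu1 mu2)%E.
Proof.
move=> _ _ Q_bounded Q_measurable prior1 prior2.
have H_ge0 : 0 <= H.
  have [w _] := prior_support_neq0 prior1.
  by have /andP[Q0 QH] := Q_bounded s w a0; exact: le_trans QH.
have finite_below_H x : (x <= H%:E)%E -> (x < +oo)%E by move/le_lt_trans; apply; exact: ltry.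
have mu2_in_ball : L1ball lam mu1 (L1dist lam mu1 mu2) mu2 by split.
apply: lee_subeD.
- exact/finite_below_H/(optPers_le_bound H_ge0 Q_bounded Q_measurable u s prior1).
- exact/finite_below_H/(optPers_le_bound H_ge0 Q_bounded Q_measurable u s prior2).
- exact/finite_below_H/(optPersSet_le_bound H_ge0 Q_bounded Q_measurable u s _ prior1).
- by rewrite mule_ge0 ?lee_fin ?divr_ge0 //; apply: integral_ge0.
- exact: optPersSet_le_optPers_L1dist.
Qed.
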